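(* Let $n$ be a positive integer, $m=1$, $A\in\mathbb{C}^{n\times n}$, $B\in\mathbb{C}^{n\times 1}$ nonzero, $(A,B)$ reachable and all eigenvalues of $A$ of modulus $<1$. Let $\mathbf{R}\in\mathbb{C}^{n\times n}$ be Hermitian, $\mathbf{R}\geq0$ and singular, with $\mathbf{R}-A\mathbf{R}A^*=BH+H^*B^*$ for some $H\in\mathbb{C}^{1\times n}$. Then $B^*\Pi_{\mathcal{N}(\mathbf{R})}B$ is invertible (i.e. nonzero).
   Context: $\mathcal{N}(\mathbf{R})$ is the null space of $\mathbf{R}$ and $\Pi_{\mathcal{N}(\mathbf{R})}$ the orthogonal projection onto it. $(A,B)$ reachable means $\operatorname{rank}[B,AB,\dots,A^{n-1}B]=n$. *)

From mathcomp Require Import all_boot all_algebra.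
From mathcomp Require Import reals complex.
Set Implicit Arguments. Unset Strict Implicit. Unset Printing Implicit Defensive.
Import GRing.Theory Num.Theory.
Local Open Scope ring_scope.

Section Defs.
Variable C : numClosedFieldType.

Definition ctmx (m n : nat) (A : 'M[C]_(m, n)) : 'M[C]_(n, m) :=
  (map_mx Num.conj A)^T.

Definition is_hermitian (n : nat) (M : 'M[C]_n) : Prop := ctmx M = M.

Definition psd (n : nat) (M : 'M[C]_n) : Prop :=
  is_hermitian M /\ forall x : 'cV[C]_n, 0 <= (ctmx x *m M *m x) 0 0.

Definition ctrb (n : nat) (A : 'M[C]_n) (B : 'cV[C]_n) : 'M[C]_n :=
  \matrix_(i < n, j < n) ((A ^+ j *m B) i ord0).

Definition reachable (n : nat) (A : 'M[C]_n) (B : 'cV[C]_n) : Prop :=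
  \rank (ctrb A B) = n.

Definition is_orth_proj_null (n : nat) (M P : 'M[C]_n) : Prop :=
  [/\ P *m P = P, ctmx P = P &
      forall x : 'cV[C]_n, M *m x = 0 <-> P *m x = x].

End Defs.

(* If [B^* P B = 0] then [P B = 0], i.e. [B] is orthogonal to [N(R)].  For
   [x] in [N(R)] the Lyapunov equation then gives [(A^* x)^* R (A^* x) = 0],
   so [A^* x] is in [N(R)] because [R >= 0].  Hence [N(R)] is an
   [A^*]-invariant subspace orthogonal to [B], thus to every [A^k B]; by
   reachability it is trivial, contradicting the singularity of [R]. *)

From mathcomp Require Import all_boot all_algebra.
From mathcomp Require Import reals complex.
From mathcomp Require Import order ring.
Import Order.TTheory GRing.Theory Num.Theory.
Local Open Scope ring_scope.
Set Implicit Arguments. Unset Strict Implicit.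

Section ConjugateTranspose.
Variable C : numClosedFieldType.
Implicit Types (m n p : nat).

Lemma ctmxM m n p (A : 'M[C]_(m, n)) (B : 'M[C]_(n, p)) :
  ctmx (A *m B) = ctmx B *m ctmx A.
Proof. by rewrite /ctmx map_mxM trmx_mul. Qed.

Lemma ctmxK m n (A : 'M[C]_(m, n)) : ctmx (ctmx A) = A.
Proof. by apply/matrixP => i j; rewrite !mxE conjCK. Qed.

Lemma ctmx0 m n : ctmx (0 : 'M[C]_(m, n)) = 0.
Proof. by apply/matrixP => i j; rewrite !mxE rmorph0. Qed.

Lemma ctmxD m n (A B : 'M[C]_(m, n)) : ctmx (A + B) = ctmx A + ctmx B.
Proof. by apply/matrixP => i j; rewrite !mxE rmorphD. Qed.

Lemma ctmxZ m n a (A : 'M[C]_(m, n)) : ctmx (a *: A) = a^* *: ctmx A.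
Proof. by apply/matrixP => i j; rewrite !mxE rmorphM. Qed.

Lemma ctmx_mulmx_self n (v : 'cV[C]_n) :
  (ctmx v *m v) 0 0 = \sum_i `|v i 0| ^+ 2.
Proof. by rewrite !mxE; apply: eq_bigr => k _; rewrite !mxE normCKC. Qed.

Lemma ctmx_mulmx_self_ge0 n (v : 'cV[C]_n) : 0 <= (ctmx v *m v) 0 0.
Proof. by rewrite ctmx_mulmx_self sumr_ge0 // => i _; rewrite exprn_ge0. Qed.

Lemma ctmx_mulmx_self_eq0 n (v : 'cV[C]_n) : (ctmx v *m v) 0 0 = 0 -> v = 0.
Proof.
rewrite ctmx_mulmx_self => /psumr_eq0P v0; apply/matrixP => i j.
have /(_ i isT) := v0 (fun i _ => exprn_ge0 2 (normr_ge0 _)).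
by rewrite (ord1 j) mxE => /eqP; rewrite sqrf_eq0 normr_eq0 => /eqP.
Qed.

Lemma ctmx_mulmx_combination n (M : 'M[C]_n) a b (v w : 'cV[C]_n) :
  ctmx (a *: v + b *: w) *m M *m (a *: v + b *: w) =
    (a^* * a) *: (ctmx v *m M *m v) + (a^* * b) *: (ctmx v *m M *m w) +
    (b^* * a) *: (ctmx w *m M *m v) + (b^* * b) *: (ctmx w *m M *m w).
Proof.
rewrite ctmxD !ctmxZ !mulmxDl !mulmxDr -!scalemxAl -!scalemxAr !scalerA.
by rewrite !addrA; congr (_ + _); rewrite -!addrA; congr (_ + _); rewrite addrC.
Qed.

(* Testing [M >= 0] on [u := (c + 1) v - a (M v)], with [a := |M v|^2] and
   [c := (M v)^* M (M v)], gives [0 <= - a^2 (c + 2)], hence [a = 0]. *)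
Lemma psd_mulmx_eq0 n (M : 'M[C]_n) (v : 'cV[C]_n) :
  psd M -> (ctmx v *m M *m v) 0 0 = 0 -> M *m v = 0.
Proof.
move=> [hermM M_ge0] vMv0; set w := M *m v.
have ctw : ctmx w = ctmx v *m M by rewrite /w ctmxM hermM.
set a : C := (ctmx w *m w) 0 0; set c : C := (ctmx w *m M *m w) 0 0.
have a_ge0 : 0 <= a := ctmx_mulmx_self_ge0 w.
have c_ge0 : 0 <= c := M_ge0 w.
have vMw : (ctmx v *m M *m w) 0 0 = a by rewrite /a ctw /w !mulmxA.
have wMv : (ctmx w *m M *m v) 0 0 = a by rewrite /a /w !mulmxA.
have := M_ge0 ((c + 1) *: v + (- a) *: w).
rewrite ctmx_mulmx_combination ![((_ + _)%R : 'M_1) 0 0]mxE ![((_ *: _)%R : 'M_1) 0 0]mxE.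
rewrite vMv0 vMw wMv -/c.
have conj_c1 : (c + 1)^* = c + 1 by rewrite geC0_conj ?addr_ge0.
have conj_na : (- a)^* = - a by rewrite conj_Creal ?realN ?ger0_real.
rewrite conj_c1 conj_na => uMu_ge0; have : 0 <= - (a ^+ 2 * (c + 2)).
  by apply: (le_trans uMu_ge0); rewrite le_eqVlt; apply/orP; left; apply/eqP; ring.
rewrite oppr_ge0 pmulr_lle0 ?ltr_wpDl // => a2_le0.
have /eqP : a ^+ 2 = 0 by apply/eqP; rewrite eq_le a2_le0 exprn_ge0.
by rewrite sqrf_eq0 => /eqP /ctmx_mulmx_self_eq0.
Qed.

End ConjugateTranspose.

Lemma det0_ker (F : idomainType) n (M : 'M[F]_n) :
  \det M = 0 -> exists2 x : 'cV_n, x != 0 & M *m x = 0.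
Proof.
move/eqP; rewrite -(det_tr M) => /det0P [v v_neq0 vMt0].
by exists v^T; rewrite ?trmx_eq0 // -(trmxK M) -trmx_mul vMt0 trmx0.
Qed.

Section NullSpace.
Variables (C : numClosedFieldType) (n : nat).
Implicit Types (M P A : 'M[C]_n) (B x : 'cV[C]_n).

Lemma orth_proj_null_orth M P B :
  is_orth_proj_null M P -> ctmx B *m P *m B = 0 ->
  forall x, M *m x = 0 -> ctmx x *m B = 0.
Proof.
move=> [PP hermP kerP] BPB0.
have PB0 : P *m B = 0.
  apply: ctmx_mulmx_self_eq0.
  by rewrite ctmxM hermP mulmxA -(mulmxA _ P P) PP BPB0 mxE.
move=> x /kerP Px; by rewrite -Px ctmxM hermP -mulmxA PB0 mulmx0.
Qed.

Lemma lyapunov_ker_invariant M A B (H : 'rV[C]_n) :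
  psd M -> M - A *m M *m ctmx A = B *m H + ctmx H *m ctmx B ->
  forall x, M *m x = 0 -> ctmx x *m B = 0 -> M *m (ctmx A *m x) = 0.
Proof.
move=> psdM lyap x Mx0 xB0; apply: psd_mulmx_eq0 => //.
have Bx0 : ctmx B *m x = 0 by rewrite -[x]ctmxK -ctmxM xB0 ctmx0.
have /eqP := congr1 (fun N => ctmx x *m N *m x) lyap.
rewrite mulmxBr mulmxBl -(mulmxA _ M x) Mx0 mulmx0 sub0r mulmxDr mulmxDl.
rewrite !mulmxA xB0 !mul0mx add0r -(mulmxA _ (ctmx B) x) Bx0 mulmx0 oppr_eq0.
by rewrite ctmxM ctmxK => /eqP ->; rewrite mxE.
Qed.

Lemma invariant_orth_ctrb A B (S : 'cV[C]_n -> Prop) :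
  (forall x, S x -> S (ctmx A *m x)) -> (forall x, S x -> ctmx x *m B = 0) ->
  forall x, S x -> ctmx x *m ctrb A B = 0.
Proof.
move=> SA SB.
have orth_krylov k x : S x -> ctmx x *m (A ^+ k *m B) = 0.
  elim: k x => [|k IHk] x Sx; first by rewrite expr0 mul1mx SB.
  rewrite exprS -mulmxE -mulmxA mulmxA -[A]ctmxK -ctmxM ctmxK.
  exact/IHk/SA.
move=> x Sx; apply/rowP => j; have /matrixP/(_ 0 0) := orth_krylov j x Sx.
rewrite !mxE => E; rewrite -[X in _ = X]E.
by apply: eq_bigr => k _; rewrite !mxE.
Qed.

Lemma reachable_orth_ctrb_eq0 A B x :
  reachable A B -> ctmx x *m ctrb A B = 0 -> x = 0.
Proof.
move=> reachAB /eqP; rewrite mulmx_free_eq0; last by rewrite /row_free reachAB.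
by move=> /eqP ctx0; rewrite -[x]ctmxK ctx0 ctmx0.
Qed.

End NullSpace.

Theorem proposition4 (R : realType) (n : nat) (A : 'M[R[i]]_n) (B : 'cV[R[i]]_n)
    (RR : 'M[R[i]]_n) (P : 'M[R[i]]_n) :
  (0 < n)%N ->
  B != 0 ->
  reachable A B ->
  (forall lambda : R[i], eigenvalue A lambda -> `|lambda| < 1) ->
  is_hermitian RR ->
  psd RR ->
  \det RR = 0 ->
  (exists H : 'rV[R[i]]_n,
      RR - A *m RR *m ctmx A = B *m H + ctmx H *m ctmx B) ->
  is_orth_proj_null RR P ->
  ctmx B *m P *m B \in unitmx.
Proof.
move=> _ _ reachAB _ _ psdRR /det0_ker [x x_neq0 RRx0] [H lyap] projP.
rewrite unitmxE unitfE det_mx11; apply: contra x_neq0 => /eqP BPB_00.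
have BPB0 : ctmx B *m P *m B = 0 by apply/matrixP => i j; rewrite !ord1 BPB_00 mxE.
have kerB := orth_proj_null_orth projP BPB0.
have kerA := lyapunov_ker_invariant psdRR lyap.
apply/eqP; apply: reachable_orth_ctrb_eq0 reachAB _.
apply: (invariant_orth_ctrb (S := fun y => RR *m y = 0)) RRx0 => y RRy0.
  exact: kerA RRy0 (kerB y RRy0).
exact: kerB.
Qed.
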